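(* For each $m\ge1$, the sequence $(u_{k;m})_{k\ge0}$ is strictly increasing and converges to $b/(m+1)$: $$u_{0;m}<u_{1;m}<\dots<u_{k;m}<\dots,\qquad \lim_{k\to\infty}u_{k;m}=\frac{b}{m+1}.$$ Moreover, if $b=2$ and $d=1$, then $u_{0;m}=0$ for all $m\ge1$ and $u_{1;m}=2/(2^{m+1}-1)$ for all $m\ge0$.
   Context: Fix $b\ge2$ and $d\in\{0,\dots,b-1\}$. A string is a finite sequence $X=(d_l,\dots,d_1)$ of digits in $\{0,\dots,b-1\}$ (leading zeros allowed), of length $|X|=l\ge0$; its value is $n(X)=\sum_{i=1}^{l}d_ib^{i-1}$ ($0$ for the empty string). For $k\ge0$, $\mu_k=\sum_{X}b^{-|X|}\delta_{n(X)/b^{|X|}}$, the sum over all strings $X$ containing $d$ exactly $k$ times; it is a finite measure on $[0,1)$ of total mass $b$. The moments are $u_{k;m}=\int_{[0,1)}x^m\,d\mu_k(x)$. *)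

From HB Require Import structures.
From mathcomp Require Import all_boot all_order all_algebra.
From mathcomp Require Import all_classical all_reals all_analysis.
Set Implicit Arguments. Unset Strict Implicit. Unset Printing Implicit Defensive.
Import Order.TTheory GRing.Theory Num.Theory.
Local Open Scope ring_scope.

(* Convention: entry i (0-based) of the tuple is the digit d_{i+1}, i.e. the
   coefficient of b^i.  (Any fixed convention gives the same multiset of
   (value, length, #d) triples.) *)

Definition strval (b l : nat) (t : l.-tuple 'I_b) : nat :=
  (\sum_(i < l) (tnth t i : nat) * b ^ i)%N.

Definition moment_len (R : realType) (b : nat) (d : 'I_b) (k m l : nat) : R :=
  \sum_(t : l.-tuple 'I_b | count_mem d t == k)
     (b%:R ^+ l)^-1 * ((strval t)%:R / b%:R ^+ l) ^+ m.

(* u_{k;m} = int x^m d mu_k(x) = sum over all strings with exactly k d's,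
   an (extended) nonnegative series over lengths l >= 0. *)
Definition u (R : realType) (b : nat) (d : 'I_b) (k m : nat) : \bar R :=
  (\sum_(0 <= l <oo) (moment_len R d k m l)%:E)%E.

From HB Require Import structures.
From mathcomp Require Import all_boot all_order all_algebra.
From mathcomp Require Import all_classical all_reals all_analysis.
From mathcomp Require Import ring lra.
Import Order.TTheory GRing.Theory Num.Theory.
Import numFieldNormedType.Exports.

Set Implicit Arguments.
Unset Strict Implicit.
Unset Printing Implicit Defensive.
Local Open Scope classical_set_scope.
Local Open Scope ring_scope.

(* Prepending a leading digit [j] to a string with point [x] gives the point
   [(j + x) / b] and raises the number of digits [d] by [j == d]. Expanding
   [((j + x) / b) ^ m] binomially, the moments satisfy
     b^(m+1) u_{k;m} = [k = m = 0] b^(m+1)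
                       + sum_{i <= m} C(m,i) sum_{j < b} j^(m-i) u_{k - [j = d]; i},
   and the same recursion on partial sums over lengths [< n] bounds the mass of
   every [mu_k] by [b], so all the series converge; in fact every [mu_k] has mass
   [b]. Isolating the terms [i = m] gives
     (b^(m+1) - b + 1) u_{k;m} = (terms with i < m) + u_{k-1;m},
   so [u_{k;m}] increases strictly in [k], by induction on [m] and then on [k].
   The limits [U_m] satisfy [(b^(m+1) - b) U_m = sum_{i < m} C(m,i) sum_j j^(m-i) U_i],
   which is solved by the moments [b / (m + 1)] of [b] times Lebesgue measure on
   [[0, 1]]: [sum_{i <= m} C(m,i) j^(m-i) / (i + 1)] telescopes over [j]. For
   [b = 2] and [d = 1] the other digit is [0], which contributes nothing to moments
   of order [m >= 1], whence [u_{0;m} = 0] and [(2^(m+1) - 1) u_{1;m} = u_{0;0} = 2]. *)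

Lemma cvg_sumr (K : numFieldType) (V : normedModType K) (T : Type)
    (F : set_system T) (I : Type) (r : seq I) (f : I -> T -> V) (a : I -> V) :
  Filter F -> (forall i, f i x @[x --> F] --> a i) ->
  \sum_(i <- r) f i x @[x --> F] --> \sum_(i <- r) a i.
Proof.
by move=> FF fa; apply: (@cvg_big _ _ +%R 0 xpredT) => //; exact: add_continuous.
Qed.

Lemma ler_sum_term (K : numDomainType) (I : finType) (F : I -> K) (i0 : I) :
  (forall i, 0 <= F i) -> F i0 <= \sum_i F i.
Proof. by move=> F_ge0; rewrite (bigD1 i0) //= lerDl sumr_ge0. Qed.

(* The integral of [t ^ m] over [[x, x + 1]], expanded by the binomial formula. *)
Lemma sum_binom_div_succ (K : numFieldType) (x : K) m :
  \sum_(i < m.+1) 'C(m, i)%:R * (x ^+ (m - i) / i.+1%:R)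
  = ((x + 1) ^+ m.+1 - x ^+ m.+1) / m.+1%:R.
Proof.
rewrite exprDn [in RHS]big_ord_recl /= subn0 bin0 expr0 mulr1 mulr1n addrAC.
rewrite subrr add0r mulr_suml; apply: eq_bigr => i _.
rewrite /bump /= add1n subSS expr1n mulr1.
have binS : 'C(m.+1, i.+1)%:R = m.+1%:R * 'C(m, i)%:R / i.+1%:R :> K.
  have : i.+1%:R * 'C(m.+1, i.+1)%:R = m.+1%:R * 'C(m, i)%:R :> K.
    by rewrite -!natrM -mul_bin_diag.
  by move=> <-; field; rewrite nat1r pnatr_eq0.
by rewrite -[in RHS]mulr_natr binS; field; rewrite !nat1r !pnatr_eq0.
Qed.

Lemma sum_binom_digits_div_succ (K : numFieldType) (b m : nat) :
  \sum_(i < m) 'C(m, i)%:R * \sum_(j < b) j%:R ^+ (m - i) * (b%:R / i.+1%:R)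
  = b%:R / m.+1%:R * (b%:R ^+ m.+1 - b%:R) :> K.
Proof.
have telescope : \sum_(j < b) ((j%:R + 1) ^+ m.+1 - j%:R ^+ m.+1) = b%:R ^+ m.+1 :> K.
  rewrite -(big_mkord xpredT (fun j => (j%:R + 1) ^+ m.+1 - j%:R ^+ m.+1)).
  rewrite (telescope_sumr_eq (fun j => j%:R ^+ m.+1)) ?expr0n ?subr0 //.
  by move=> j _; rewrite natr1.
have full : \sum_(i < m.+1) 'C(m, i)%:R *
      \sum_(j < b) j%:R ^+ (m - i) * (b%:R / i.+1%:R)
    = b%:R * (b%:R ^+ m.+1 / m.+1%:R) :> K.
  rewrite -telescope mulr_suml mulr_sumr.
  under [RHS]eq_bigr do rewrite -sum_binom_div_succ mulr_sumr.
  rewrite exchange_big /=; apply: eq_bigr => i _; rewrite mulr_sumr.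
  by apply: eq_bigr => j _; ring.
have top : \sum_(j < b) j%:R ^+ (m - m) * (b%:R / m.+1%:R)
    = b%:R * (b%:R / m.+1%:R) :> K.
  under eq_bigr do rewrite subnn expr0 mul1r.
  by rewrite sumr_const card_ord [RHS]mulr_natl.
move: full; rewrite big_ord_recr /= top binn => full.
by apply: (addIr (1%:R * (b%:R * (b%:R / m.+1%:R)))); rewrite full; ring.
Qed.

Section LeadingDigit.
Variables (R : realType) (b : nat) (d : 'I_b).
Hypothesis b_gt1 : (1 < b)%N.

Let bR_gt1 : (1 : R) < b%:R. Proof. by rewrite ltr1n. Qed.
Let bR_gt0 : (0 : R) < b%:R. Proof. exact: lt_trans ltr01 bR_gt1. Qed.
Let bR_neq0 : (b%:R : R) != 0. Proof. exact: lt0r_neq0. Qed.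
Let bX_neq0 n : (b%:R ^+ n : R) != 0. Proof. exact: expf_neq0. Qed.

Definition strfrac l (t : l.-tuple 'I_b) : R := (strval t)%:R / b%:R ^+ l.

Lemma strval_lt l (t : l.-tuple 'I_b) : (strval t < b ^ l)%N.
Proof.
have b_gt0 : (0 < b)%N by exact: ltn_trans b_gt1.
suff : (strval t <= (b ^ l).-1)%N by rewrite -ltnS prednK // expn_gt0 b_gt0.
rewrite predn_exp /strval big_distrr /= leq_sum // => i _.
by rewrite leq_mul2r -ltnS prednK // ltn_ord orbT.
Qed.

Lemma strfrac_ge0 l (t : l.-tuple 'I_b) : 0 <= strfrac t.
Proof. by rewrite divr_ge0 // exprn_ge0. Qed.

Lemma strfrac_le1 l (t : l.-tuple 'I_b) : strfrac t <= 1.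
Proof.
rewrite ler_pdivrMr ?exprn_gt0 // mul1r -natrX ler_nat ltnW //; exact: strval_lt.
Qed.

(* Since the last entry of the tuple is the most significant digit, [rcons]
   adds a leading digit to the string. *)
Definition add_lead_digit l (p : 'I_b * l.-tuple 'I_b) : l.+1.-tuple 'I_b :=
  [tuple of rcons p.2 p.1].

Lemma add_lead_digit_bij l : bijective (@add_lead_digit l).
Proof.
apply: inj_card_bij; last by rewrite card_prod !card_tuple card_ord expnS.
by move=> [j t] [j' t'] /(congr1 val) /= /rcons_inj [/val_inj -> ->].
Qed.

Lemma count_add_lead_digit l (p : 'I_b * l.-tuple 'I_b) :
  count_mem d (add_lead_digit p) = (count_mem d p.2 + (p.1 == d))%N.
Proof. by rewrite /= -cats1 count_cat /= addn0 eq_sym. Qed.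

Lemma strfrac_add_lead_digit l (p : 'I_b * l.-tuple 'I_b) :
  strfrac (add_lead_digit p) = (p.1%:R + strfrac p.2) / b%:R.
Proof.
have lead_val : strval (add_lead_digit p) = (strval p.2 + p.1 * b ^ l)%N.
  rewrite /strval big_ord_recr /= (tnth_nth p.1) /= nth_rcons size_tuple ltnn eqxx.
  congr (_ + _)%N; apply: eq_bigr => i _.
  by rewrite !(tnth_nth p.1) /= nth_rcons size_tuple ltn_ord.
rewrite /strfrac lead_val natrD natrM natrX exprS; field.
by rewrite bR_neq0 bX_neq0.
Qed.

(* [tail_moment j F k i] is [F (k - (j == d)) i], with value [0] when the digit
   [j = d] would have to be removed from a string containing no [d]. *)
Definition tail_moment (j : 'I_b) (F : nat -> nat -> R) k i : R :=
  if j == d then (if k is k'.+1 then F k' i else 0) else F k i.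

Definition lead_moment (F : nat -> nat -> R) k m : R :=
  (b%:R ^+ m.+1)^-1 *
  \sum_(i < m.+1) 'C(m, i)%:R * \sum_(j < b) j%:R ^+ (m - i) * tail_moment j F k i.

Lemma moment_len0 k m : moment_len R d k m 0 = ((k == 0) && (m == 0))%:R.
Proof.
rewrite /moment_len; case: k => [|k]; last by rewrite big_pred0 // => t; rewrite tuple0.
rewrite (big_pred1 [tuple]) => [|t]; last by rewrite tuple0; apply/esym/eqP.
by rewrite /strval big_ord0 expr0 invr1 mul1r mul0r expr0n.
Qed.

Lemma moment_lenE k m l : moment_len R d k m l =
  \sum_(t : l.-tuple 'I_b | count_mem d t == k) (b%:R ^+ l)^-1 * strfrac t ^+ m.
Proof. by []. Qed.

Lemma tail_moment_len j k i l :
  tail_moment j (fun k i => moment_len R d k i l) k i =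
  \sum_(t : l.-tuple 'I_b | (count_mem d t + (j == d) == k)%N)
     (b%:R ^+ l)^-1 * strfrac t ^+ i.
Proof.
rewrite /tail_moment /moment_len; case: eqP => _; last first.
  by apply: eq_bigl => t; rewrite addn0.
case: k => [|k]; last by apply: eq_bigl => t; rewrite addn1.
by rewrite big_pred0 // => t; rewrite addn1.
Qed.

Lemma moment_lenS k m l :
  moment_len R d k m l.+1 = lead_moment (fun k i => moment_len R d k i l) k m.
Proof.
have expand (j : 'I_b) (t : l.-tuple 'I_b) :
    (b%:R ^+ l.+1)^-1 * ((j%:R + strfrac t) / b%:R) ^+ m = (b%:R ^+ m.+1)^-1 *
    \sum_(i < m.+1) 'C(m, i)%:R * (j%:R ^+ (m - i) * ((b%:R ^+ l)^-1 * strfrac t ^+ i)).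
  rewrite expr_div_n exprDn mulr_suml !mulr_sumr; apply: eq_bigr => i _.
  by rewrite -mulr_natl !exprS; field; rewrite !mulr1 !bX_neq0.
rewrite /lead_moment; under eq_bigr do rewrite mulr_sumr.
rewrite exchange_big /= mulr_sumr.
under eq_bigr => j _ do under eq_bigr => i _ do rewrite tail_moment_len !mulr_sumr.
under eq_bigr => j _ do rewrite exchange_big /= mulr_sumr.
under eq_bigr => j _ do under eq_bigr => t _ do rewrite -expand.
rewrite pair_big_dep /= moment_lenE (reindex (@add_lead_digit l)) /=; last first.
  exact/onW_bij/add_lead_digit_bij.
by apply: eq_big => p; rewrite ?count_add_lead_digit ?strfrac_add_lead_digit.
Qed.

Definition moment_upto n k m : R := \sum_(l < n) moment_len R d k m l.

Lemma tail_moment_sum n (F : nat -> nat -> nat -> R) j k i :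
  tail_moment j (fun k i => \sum_(l < n) F l k i) k i =
  \sum_(l < n) tail_moment j (F l) k i.
Proof. by rewrite /tail_moment; case: (j == d); case: k => //; rewrite big1. Qed.

Lemma lead_moment_sum n (F : nat -> nat -> nat -> R) k m :
  lead_moment (fun k i => \sum_(l < n) F l k i) k m =
  \sum_(l < n) lead_moment (F l) k m.
Proof.
rewrite /lead_moment -mulr_sumr exchange_big /=; congr (_ * _).
apply: eq_bigr => i _; rewrite -mulr_sumr exchange_big /=; congr (_ * _).
by apply: eq_bigr => j _; rewrite tail_moment_sum mulr_sumr.
Qed.

Lemma moment_uptoS n k m :
  moment_upto n.+1 k m = ((k == 0) && (m == 0))%:R + lead_moment (moment_upto n) k m.
Proof.
rewrite /moment_upto big_ord_recl moment_len0.
rewrite (lead_moment_sum n (fun l k i => moment_len R d k i l)).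
by congr (_ + _); apply: eq_bigr => l _; exact: moment_lenS.
Qed.

Lemma sum_tail_moment (F : nat -> nat -> R) k i :
  \sum_(j < b) tail_moment j F k i = tail_moment d F k i + (b%:R - 1) * F k i.
Proof.
rewrite (bigD1 d) //=; congr (_ + _).
rewrite (eq_bigr (fun=> F k i)) => [|j /negbTE jd]; last by rewrite /tail_moment jd.
by rewrite sumr_const cardC1 card_ord -[LHS]mulr_natl -subn1 natrB // ltnW.
Qed.

Definition lower_moment (F : nat -> nat -> R) k m : R :=
  \sum_(i < m) 'C(m, i)%:R * \sum_(j < b) j%:R ^+ (m - i) * tail_moment j F k i.

Lemma lead_momentE (F : nat -> nat -> R) k m : b%:R ^+ m.+1 * lead_moment F k m =
  lower_moment F k m + tail_moment d F k m + (b%:R - 1) * F k m.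
Proof.
rewrite /lead_moment mulrA mulfV // mul1r big_ord_recr /= subnn binn mul1r.
under [X in _ + X]eq_bigr do rewrite expr0 mul1r.
by rewrite sum_tail_moment addrA.
Qed.

Lemma moment_len_ge0 k m l : 0 <= moment_len R d k m l.
Proof.
rewrite moment_lenE sumr_ge0 // => t _.
by rewrite mulr_ge0 ?invr_ge0 ?exprn_ge0 ?strfrac_ge0.
Qed.

Lemma moment_len_le_mass k m l : moment_len R d k m l <= moment_len R d k 0 l.
Proof.
rewrite !moment_lenE ler_sum // => t _.
rewrite expr0 mulr1 ler_piMr ?invr_ge0 ?exprn_ge0 //.
by rewrite exprn_ile1 ?strfrac_ge0 ?strfrac_le1.
Qed.

Lemma moment_upto_ge0 n k m : 0 <= moment_upto n k m.
Proof. by apply: sumr_ge0 => l _; exact: moment_len_ge0. Qed.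

Lemma tail_moment_ge0 (F : nat -> nat -> R) j k i :
  (forall k, 0 <= F k i) -> 0 <= tail_moment j F k i.
Proof. by rewrite /tail_moment; case: (j == d); case: k. Qed.

Lemma lead_moment_mass (F : nat -> nat -> R) k :
  b%:R * lead_moment F k 0 = tail_moment d F k 0 + (b%:R - 1) * F k 0.
Proof. by rewrite -[b%:R]expr1 lead_momentE /lower_moment big_ord0 add0r. Qed.

Lemma moment_upto_mass_le n k : moment_upto n k 0 <= b%:R.
Proof.
elim: n k => [|n IHn] k; first by rewrite /moment_upto big_ord0 ler0n.
rewrite moment_uptoS -(ler_pM2l bR_gt0) mulrDr lead_moment_mass /tail_moment eqxx.
have := IHn k; have := moment_upto_ge0 n k 0.
by case: k => [|k] /=; last have := IHn k; have := bR_gt1; move=> *; nra.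
Qed.

Lemma moment_upto_le n k m : moment_upto n k m <= b%:R.
Proof.
apply: le_trans (moment_upto_mass_le n k).
by apply: ler_sum => l _; exact: moment_len_le_mass.
Qed.

Lemma moment_upto_cvg k m : cvgn (fun n => moment_upto n k m).
Proof.
apply: nondecreasing_is_cvgn; last by exists b%:R => _ [n _ <-]; exact: moment_upto_le.
apply/nondecreasing_seqP => n.
by rewrite /moment_upto big_ord_recr /= lerDl moment_len_ge0.
Qed.

Definition moment k m : R := limn (fun n => moment_upto n k m).

Lemma u_moment k m : u R d k m = (moment k m)%:E.
Proof.
rewrite /u /moment -EFin_lim; last exact: moment_upto_cvg.
by congr (limn _); apply: funext => n /=; rewrite sumEFin big_mkord.
Qed.

Lemma moment_ge0 k m : 0 <= moment k m.
Proof.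
apply: limr_ge; first exact: moment_upto_cvg.
by apply: nearW => n; exact: moment_upto_ge0.
Qed.

Lemma moment_le k m : moment k m <= b%:R.
Proof.
apply: limr_le; first exact: moment_upto_cvg.
by apply: nearW => n; exact: moment_upto_le.
Qed.

Lemma tail_moment_cvg (F : nat -> nat -> nat -> R) (G : nat -> nat -> R) j k i :
  (forall k, F n k i @[n --> \oo] --> G k i) ->
  tail_moment j (F n) k i @[n --> \oo] --> tail_moment j G k i.
Proof. by rewrite /tail_moment; case: (j == d); case: k => // *; exact: cvg_cst. Qed.

Lemma lead_moment_cvg (F : nat -> nat -> nat -> R) (G : nat -> nat -> R) k m :
  (forall k i, F n k i @[n --> \oo] --> G k i) ->
  lead_moment (F n) k m @[n --> \oo] --> lead_moment G k m.
Proof.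
move=> FG; apply: cvgMl_tmp; apply: cvg_sumr => i; apply: cvgMl_tmp.
by apply: cvg_sumr => j; apply: cvgMl_tmp; exact: tail_moment_cvg.
Qed.

Lemma moment_fixpoint k m :
  moment k m = ((k == 0) && (m == 0))%:R + lead_moment moment k m.
Proof.
have cv : moment_upto n k m @[n --> \oo] --> moment k m := @moment_upto_cvg k m.
have cvS : moment_upto n.+1 k m @[n --> \oo] -->
    ((k == 0) && (m == 0))%:R + lead_moment moment k m.
  under eq_cvg do rewrite moment_uptoS.
  apply: cvgD; first exact: cvg_cst.
  by apply: lead_moment_cvg => *; exact: moment_upto_cvg.
rewrite (cvg_shiftS (fun n => moment_upto n k m)) in cvS.
exact: (cvg_unique _ cv cvS).
Qed.

Lemma moment_balance k m :
  (b%:R ^+ m.+1 - (b%:R - 1)) * moment k m = ((k == 0) && (m == 0))%:R * b%:R ^+ m.+1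
    + lower_moment moment k m + tail_moment d moment k m.
Proof.
by rewrite mulrBl {1}moment_fixpoint mulrDr lead_momentE; ring.
Qed.

Lemma moment_mass k : moment k 0 = b%:R.
Proof.
elim: k => [|k IHk]; [have := moment_balance 0 0 | have := moment_balance k.+1 0];
  rewrite expr1 /lower_moment big_ord0 /tail_moment eqxx /=; lra.
Qed.

Lemma tail_moment_mono (F : nat -> nat -> R) j k i : (forall k, 0 <= F k i) ->
  (forall k, F k i <= F k.+1 i) -> tail_moment j F k i <= tail_moment j F k.+1 i.
Proof. by rewrite /tail_moment; case: (j == d); case: k. Qed.

Lemma lower_moment_mono (F : nat -> nat -> R) k m : (forall k i, 0 <= F k i) ->
  (forall i k, (i < m)%N -> F k i <= F k.+1 i) ->
  lower_moment F k m <= lower_moment F k.+1 m.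
Proof.
move=> F_ge0 F_mono; apply: ler_sum => i _; rewrite ler_wpM2l //.
apply: ler_sum => j _; rewrite ler_wpM2l ?exprn_ge0 //.
by apply: tail_moment_mono => // k'; exact: F_mono.
Qed.

Lemma lower_moment_ge_term (F : nat -> nat -> R) (j : 'I_b) k m :
  (0 < m)%N -> (forall k i, 0 <= F k i) ->
  j%:R ^+ m * tail_moment j F k 0 <= lower_moment F k m.
Proof.
case: m => // m _ F_ge0; rewrite /lower_moment.
apply: le_trans (ler_sum_term ord0 _) => [|i]; last first.
  by rewrite mulr_ge0 // sumr_ge0 // => j' _; rewrite mulr_ge0 ?exprn_ge0 ?tail_moment_ge0.
rewrite bin0 mul1r subn0; apply: le_trans (ler_sum_term j _) => // j'.
by rewrite mulr_ge0 ?exprn_ge0 ?tail_moment_ge0.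
Qed.

Lemma lower_moment_ge_tail_term (F : nat -> nat -> R) k m :
  (0 < m)%N -> (forall k i, 0 <= F k i) ->
  (forall i k, (i < m)%N -> F k i <= F k.+1 i) ->
  d%:R ^+ m * (tail_moment d F k.+1 0 - tail_moment d F k 0)
    <= lower_moment F k.+1 m - lower_moment F k m.
Proof.
case: m => // m _ F_ge0 F_mono; rewrite /lower_moment -sumrB.
have term_ge0 (i : 'I_m.+1) (j : 'I_b) : 0 <= j%:R ^+ (m.+1 - i) *
    (tail_moment j F k.+1 i - tail_moment j F k i).
  by rewrite mulr_ge0 ?exprn_ge0 // subr_ge0 tail_moment_mono // => k'; exact: F_mono.
apply: le_trans (ler_sum_term ord0 _) => [|i]; last first.
  rewrite -mulrBr -sumrB mulr_ge0 // sumr_ge0 // => j _.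
  by rewrite -mulrBr term_ge0.
rewrite -mulrBr -sumrB bin0 mul1r; apply: le_trans (ler_sum_term d _) => [|j].
  by rewrite -mulrBr subn0.
by rewrite -mulrBr term_ge0.
Qed.

Lemma bR_lt_expS m : (0 < m)%N -> b%:R < b%:R ^+ m.+1 :> R.
Proof. by move=> m_gt0; rewrite -[X in X < _]expr1 ltr_eXn2l. Qed.

Lemma moment_lt_succ m : (0 < m)%N -> forall k, moment k m < moment k.+1 m.
Proof.
elim/ltn_ind: m => m IHm m_gt0.
have mono i k : (i < m)%N -> moment k i <= moment k.+1 i.
  by case: i => [|i] im; [rewrite !moment_mass | exact/ltW/IHm].
have bal k : (b%:R ^+ m.+1 - (b%:R - 1)) * moment k m =
    lower_moment moment k m + tail_moment d moment k m.
  by rewrite moment_balance (negbTE (lt0n_neq0 m_gt0)) andbF mul0r add0r.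
have lower_le k := lower_moment_mono k moment_ge0 mono.
have c_gt0 : 0 < b%:R ^+ m.+1 - (b%:R - 1) :> R by have := bR_lt_expS m_gt0; lra.
elim=> [|k IHk].
  have bal0 := bal 0%N; have bal1 := bal 1%N.
  rewrite /tail_moment eqxx /= in bal0 bal1.
  suff : lower_moment moment 0 m < lower_moment moment 1 m + moment 0 m by nra.
  have := lower_le 0%N; have := moment_ge0 0 m; have := bR_gt0.
  (* Strictness comes from the string [1] if [d = 0], and from [d] otherwise. *)
  case: (posnP d) => [d0 | d_gt0].
    have one_ne_d : (Ordinal b_gt1 == d) = false.
      by apply/negbTE/eqP => /(congr1 val) /=; rewrite d0.
    have := lower_moment_ge_term (Ordinal b_gt1) 0 m_gt0 moment_ge0.
    by rewrite /tail_moment one_ne_d moment_mass expr1n mul1r; nra.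
  have := lower_moment_ge_tail_term 0 m_gt0 moment_ge0 mono.
  rewrite /tail_moment eqxx moment_mass subr0.
  have : 0 < d%:R ^+ m * b%:R :> R by rewrite mulr_gt0 // exprn_gt0 // ltr0n.
  lra.
have := bal k.+1; have := bal k.+2; rewrite /tail_moment eqxx /=.
have := lower_le k.+1; nra.
Qed.

Lemma tail_moment_cvg_shift (F : nat -> nat -> R) j i (l : R) :
  F k i @[k --> \oo] --> l -> tail_moment j F k i @[k --> \oo] --> l.
Proof. by rewrite /tail_moment; case: (j == d) => // Fl; rewrite -cvg_shiftS. Qed.

Lemma lower_moment_cvg (F : nat -> nat -> R) m (l : nat -> R) :
  (forall i, (i < m)%N -> F k i @[k --> \oo] --> l i) ->
  lower_moment F k m @[k --> \oo] -->
    \sum_(i < m) 'C(m, i)%:R * \sum_(j < b) j%:R ^+ (m - i) * l i.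
Proof.
move=> Fl; apply: cvg_sumr => i; apply: cvgMl_tmp; apply: cvg_sumr => j.
by apply: cvgMl_tmp; apply: tail_moment_cvg_shift; exact: Fl.
Qed.

Lemma moment_cvg m : moment k m @[k --> \oo] --> (b%:R / m.+1%:R : R).
Proof.
elim/ltn_ind: m => m IHm; case: (posnP m) => [-> | m_gt0].
  by under eq_cvg do rewrite moment_mass; rewrite divr1; exact: cvg_cst.
have cv : cvgn (moment ^~ m).
  apply: nondecreasing_is_cvgn; last by exists b%:R => _ [k _ <-]; exact: moment_le.
  by apply/nondecreasing_seqP => k; exact/ltW/moment_lt_succ.
set l := limn (moment ^~ m) in cv *.
pose c : R := b%:R ^+ m.+1 - (b%:R - 1).
have balance_eq k :
    c * moment k m - tail_moment d moment k m = lower_moment moment k m.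
  by rewrite moment_balance (negbTE (lt0n_neq0 m_gt0)) andbF mul0r add0r addrK.
have lhs_cvg : c * moment k m - tail_moment d moment k m @[k --> \oo] --> c * l - l.
  by apply: cvgB; [exact: cvgMl_tmp | exact: tail_moment_cvg_shift].
have rhs_cvg : c * moment k m - tail_moment d moment k m @[k --> \oo] -->
    (b%:R / m.+1%:R * (b%:R ^+ m.+1 - b%:R) : R).
  under eq_cvg do rewrite balance_eq.
  rewrite -sum_binom_digits_div_succ.
  exact: (@lower_moment_cvg moment m (fun i => b%:R / i.+1%:R)).
have lim_eq : c * l - l = b%:R / m.+1%:R * (b%:R ^+ m.+1 - b%:R).
  exact: (cvg_unique _ lhs_cvg rhs_cvg).
have nz : b%:R ^+ m.+1 - b%:R != 0 :> R by rewrite subr_eq0 gt_eqF ?bR_lt_expS.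
suff -> : (b%:R / m.+1%:R : R) = l by [].
by apply: (mulIf nz); rewrite -lim_eq /c; ring.
Qed.

Section Binary.
Hypotheses (b2 : b = 2%N) (d1 : d = 1%N :> nat).

Lemma binary_digit_neq (j : 'I_b) : j != d -> j = 0%N :> nat.
Proof.
move=> jd; have := ltn_ord j; rewrite {2}b2.
have : (j : nat) != 1%N.
  by apply: contra jd => /eqP j1; apply/eqP/val_inj; rewrite /= j1 d1.
by case: (nat_of_ord j) => [|[|]].
Qed.

Lemma lower_moment_binary (F : nat -> nat -> R) k m :
  lower_moment F k m = \sum_(i < m) 'C(m, i)%:R * tail_moment d F k i.
Proof.
apply: eq_bigr => i _; congr (_ * _).
rewrite (bigD1 d) //= d1 expr1n mul1r big1 ?addr0 // => j /binary_digit_neq ->.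
by rewrite expr0n subn_eq0 leqNgt ltn_ord mul0r.
Qed.

Lemma moment0_binary m : (0 < m)%N -> moment 0 m = 0.
Proof.
move=> m_gt0; have := moment_balance 0 m.
rewrite lower_moment_binary big1 => [|i _]; last by rewrite /tail_moment eqxx mulr0.
rewrite /tail_moment eqxx (negbTE (lt0n_neq0 m_gt0)) /= mul0r !addr0.
have := bR_lt_expS m_gt0; have := bR_gt1; have := moment_ge0 0 m; nra.
Qed.

Lemma moment1_binary m : moment 1 m = 2 / (2 ^+ m.+1 - 1).
Proof.
have bR : b%:R = 2 :> R by rewrite b2.
have two_sub1 : 2 - 1 = 1 :> R by ring.
case: m => [|m]; first by rewrite moment_mass bR expr1 two_sub1 divr1.
have := moment_balance 1 m.+1.
rewrite lower_moment_binary big_ord_recl big1 => [|i _]; last first.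
  by rewrite /tail_moment eqxx moment0_binary ?mulr0.
rewrite /tail_moment eqxx moment_mass moment0_binary //= bin0 mul1r mul0r.
rewrite !addr0 add0r bR two_sub1 => bal.
have c_neq0 : 2 ^+ m.+2 - 1 != 0 :> R.
  by have := bR_lt_expS (ltn0Sn m); rewrite bR => ?; rewrite gt_eqF //; lra.
by apply: (mulIf c_neq0); rewrite divfK // mulrC.
Qed.

End Binary.

End LeadingDigit.

Theorem mainTheorem11 (R : realType) (b : nat) (d : 'I_b) (hb : (1 < b)%N) :
  (forall m : nat, (0 < m)%N ->
     (forall k : nat, (u R d k m < u R d k.+1 m)%E) /\
     (u R d k m @[k --> \oo] --> (b%:R / m.+1%:R : R)%:E)) /\
  (b = 2%N -> nat_of_ord d = 1%N ->
     (forall m : nat, (0 < m)%N -> u R d 0 m = 0%E) /\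
     (forall m : nat, u R d 1 m = (2 / (2 ^+ m.+1 - 1) : R)%:E)).
Proof.
split=> [m m_gt0 | b2 d1]; split.
- by move=> k; rewrite !(u_moment R d hb) lte_fin; exact: moment_lt_succ.
- under eq_cvg do rewrite (u_moment R d hb).
  exact: cvg_comp (@moment_cvg R b d hb m) _.
- by move=> m m_gt0; rewrite (u_moment R d hb) (moment0_binary R hb b2 d1).
- by move=> m; rewrite (u_moment R d hb) (moment1_binary R hb b2 d1).
Qed.
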